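(* Let $\mathfrak g$ be a finite-dimensional completely solvable Lie superalgebra over $\mathbf k$ with $N=\dim\mathfrak g$. Then (1) every minimal (graded) ideal of $\mathfrak g$ is one-dimensional; and (2) there exists a chain of graded ideals $\mathfrak g=\mathfrak g_0\supset\mathfrak g_1\supset\cdots\supset\mathfrak g_{N-1}\supset\mathfrak g_N=0$ of $\mathfrak g$ with $\dim\mathfrak g_i=N-i$ for all $i$.
   Context: $\mathbf k$ is algebraically closed of characteristic $p>2$. A Lie superalgebra $\mathfrak g$ is completely solvable if its derived sub-superalgebra $\mathfrak g^{(1)}=[\mathfrak g,\mathfrak g]$ is nilpotent. Ideals are $\mathbb Z_2$-graded. *)

From HB Require Import structures.
From mathcomp Require Import all_boot all_order all_algebra.
Set Implicit Arguments. Unset Strict Implicit. Unset Printing Implicit Defensive.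
Import GRing.Theory.
Local Open Scope ring_scope.


Section LieSuper.
Variables (K : fieldType) (V : vectType K).

(* homogeneous component of parity b (false = even, true = odd) *)
Definition comp (V0 V1 : {vspace V}) (b : bool) : {vspace V} :=
  if b then V1 else V0.

Definition sgn (a b : bool) : K := (-1) ^+ (a && b).

Definition is_lie_superalgebra (br : V -> V -> V) (V0 V1 : {vspace V}) : Prop :=
  ((V0 + V1)%VS = fullv /\ directv (V0 + V1)) /\
      (forall (a : K) (x y z : V), br (a *: x + y) z = a *: br x z + br y z) /\
      (forall (a : K) (x y z : V), br z (a *: x + y) = a *: br z x + br z y) /\
      (forall (i j : bool) (x y : V), x \in comp V0 V1 i -> y \in comp V0 V1 j ->
          br x y \in comp V0 V1 (i (+) j)) /\
      (forall (i j : bool) (x y : V), x \in comp V0 V1 i -> y \in comp V0 V1 j ->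
          br x y = - (sgn i j *: br y x)) /\
      (forall (i j : bool) (x y z : V), x \in comp V0 V1 i -> y \in comp V0 V1 j ->
          br x (br y z) = br (br x y) z + sgn i j *: br y (br x z)) /\
      (* [x,[x,x]] = 0 for odd x (needed as an axiom in characteristic 3) *)
      (forall x : V, x \in V1 -> br x (br x x) = 0).

Definition brack_vs (br : V -> V -> V) (A B : {vspace V}) : {vspace V} :=
  <<[seq br a b | a <- vbasis A, b <- vbasis B]>>.

Definition graded (V0 V1 : {vspace V}) (I : {vspace V}) : Prop :=
  I = ((I :&: V0) + (I :&: V1))%VS.

Definition graded_ideal br (V0 V1 I : {vspace V}) : Prop :=
  graded V0 V1 I /\ (brack_vs br fullv I <= I)%VS.

Definition minimal_graded_ideal br (V0 V1 I : {vspace V}) : Prop :=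
  [/\ graded_ideal br V0 V1 I, I != 0%VS &
      forall J : {vspace V}, graded_ideal br V0 V1 J -> (J <= I)%VS ->
        J = 0%VS \/ J = I].

(* lower central series of a subalgebra D : D^1 = D, D^(k+1) = [D, D^k] *)
Fixpoint lower_central br (D : {vspace V}) (k : nat) : {vspace V} :=
  match k with
  | 0 => D
  | k'.+1 => brack_vs br D (lower_central br D k')
  end.

Definition nilpotent_sub br (D : {vspace V}) : Prop :=
  exists k, lower_central br D k = 0%VS.

Definition derived br : {vspace V} := brack_vs br fullv fullv.

Definition completely_solvable br : Prop := nilpotent_sub br (derived br).

End LieSuper.

From HB Require Import structures.
From mathcomp Require Import all_boot all_order all_algebra.
From Pilot Require Import Defs.
From Stdlib Require Import Classical.
Set Implicit Arguments. Unset Strict Implicit. Unset Printing Implicit Defensive.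
Import GRing.Theory.
Local Open Scope ring_scope.

(* Both claims rest on one fact: if J ⊂ I are graded ideals with no graded
   ideal strictly between them, then dim I = dim J + 1.  If I ⊄ [g,g] + J,
   minimality gives [g,I] ⊆ J.  Otherwise minimality and the nilpotency of
   [g,g] give [[g,g],I] ⊆ J; then an odd x acts on I/J by 0 (because
   2 [x,[x,w]] = [[x,x],w] and 2 ≠ 0), and an even x acts by a scalar a: the
   kernel of ad x - a on I/J, for an eigenvalue a (k is algebraically closed),
   is again a graded ideal above J.  So every homogeneous v ∈ I \ J spans I
   modulo J.  Part (1) is the case J = 0; part (2) refines 0 ⊂ g one
   dimension at a time. *)

Section Eigenvector.
Variable K : closedFieldType.

Lemma leigenvector_exists (V : vectType K) (f : 'End(V)) : (0 < \dim {:V})%N ->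
  exists a, exists2 v, v != 0 & f v = a *: v.
Proof.
move=> dimV_gt0; have eb := vbasisP (fullv : {vspace V}).
pose A := passmx.mxof (vbasis fullv) (vbasis fullv) f.
have /closed_rootP [a ra] : size (char_poly A) != 1%N.
  by rewrite size_char_poly; case: (\dim _) dimV_gt0.
have Aa : eigenvalue A a by rewrite eigenvalue_root_char.
have : passmx.leigenspace f a != 0%VS.
  by rewrite (passmx.leigenspaceE eb) passmx.vsof_eq0.
rewrite -vpick0 => v0; exists a, (vpick (passmx.leigenspace f a)) => //.
have := memv_pick (passmx.leigenspace f a).
by rewrite memv_ker add_lfunE opp_lfunE scale_lfunE id_lfunE subr_eq0 => /eqP.
Qed.

Lemma leigenvector_mod (V : vectType K) (f : 'End(V)) (J I : {vspace V}) :
    (J <= I)%VS -> ~~ (I <= J)%VS -> (forall v, v \in I -> f v \in I) ->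
  exists a c, [/\ c \in I, c \notin J & f c - a *: c \in J].
Proof.
move=> JI nIJ fI; pose C := (I :\: J)%VS.
have CJ0 : (C :&: J = 0)%VS := capv_diff I J.
have CJI : (C + J = I)%VS by rewrite addv_diff; apply/addv_idPl.
pose g : 'End(subvs_of C) :=
  (linfun (vsproj C) \o daddv_pi C J \o f \o linfun vsval)%VF.
have [|a [w w0 gw]] := leigenvector_exists g.
  by rewrite dimvf /dim /= lt0n dimv_eq0 diffv_eq0.
have cC : vsval w \in C := subvsP w.
have cI : vsval w \in I by rewrite -CJI (subvP (addvSl C J)).
exists a, (vsval w); split=> //.
  apply: contra w0 => cJ; apply/eqP/subvs_inj; apply/eqP.
  by rewrite linear0 -memv0 -CJ0 memv_cap cC.
have piC : daddv_pi C J (f (vsval w)) = a *: vsval w.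
  by have := congr1 vsval gw; rewrite !comp_lfunE !lfunE /= vsprojK ?memv_pi.
have := daddv_pi_add CJ0 (_ : f (vsval w) \in C + J)%VS.
rewrite CJI fI // piC => /(_ isT) <-.
by rewrite addrC addKr memv_pi.
Qed.

End Eigenvector.

Lemma dimv_add_line (K : fieldType) (V : vectType K) (U : {vspace V}) v :
  v \notin U -> \dim (U + <[v]>) = (\dim U).+1.
Proof.
move=> vU; have v0 : v != 0 by apply: contraNneq vU => ->; rewrite mem0v.
rewrite dimv_disjoint_sum ?dim_vline ?v0 ?addn1 //; apply/eqP.
rewrite -subv0; apply/subvP => w /memv_capP [wU /vlineP [k def_w]].
rewrite memv0 def_w; have [->|k0] := eqVneq k 0; first by rewrite scale0r.
by case/negP: vU; rewrite -[v](scalerK k0) memvZ // -def_w.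
Qed.

Section LieSuperalgebra.
Variables (K : fieldType) (V : vectType K) (br : V -> V -> V) (V0 V1 : {vspace V}).
Hypothesis hLie : is_lie_superalgebra br V0 V1.

Local Notation comp := (comp V0 V1).
Local Notation graded_ideal := (graded_ideal br V0 V1).

Let brDZl := hLie.2.1.
Let brDZr := hLie.2.2.1.
Let br_comp := hLie.2.2.2.1.
Let jacobi := hLie.2.2.2.2.2.1.

Lemma br0r z : br z 0 = 0.
Proof.
have e := brDZr 1 0 0 z; rewrite !scale1r addr0 in e.
by apply: (@addrI _ (br z 0)); rewrite addr0 -e.
Qed.
Lemma brDl x y z : br (x + y) z = br x z + br y z.
Proof. by have := brDZl 1 x y z; rewrite !scale1r. Qed.
Lemma brDr x y z : br z (x + y) = br z x + br z y.
Proof. by have := brDZr 1 x y z; rewrite !scale1r. Qed.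
Lemma brZr a x z : br z (a *: x) = a *: br z x.
Proof. by have := brDZr a x 0 z; rewrite !addr0 br0r addr0. Qed.
Lemma brBr x y z : br z (x - y) = br z x - br z y.
Proof. by rewrite brDr -scaleN1r brZr scaleN1r. Qed.

Definition ad_fun w x := br w x.
Definition adr_fun w x := br x w.
Fact ad_fun_is_linear w : linear (ad_fun w). Proof. by move=> a x y; apply: brDZr. Qed.
Fact adr_fun_is_linear w : linear (adr_fun w). Proof. by move=> a x y; apply: brDZl. Qed.
HB.instance Definition _ w :=
  GRing.isLinear.Build K V V *:%R (ad_fun w) (ad_fun_is_linear w).
HB.instance Definition _ w :=
  GRing.isLinear.Build K V V *:%R (adr_fun w) (adr_fun_is_linear w).
Definition ad w : 'End(V) := linfun (ad_fun w).
Definition adr w : 'End(V) := linfun (adr_fun w).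
Lemma adE w x : ad w x = br w x. Proof. by rewrite lfunE. Qed.
Lemma adrE w x : adr w x = br x w. Proof. by rewrite lfunE. Qed.

Let V0V1_0 : (V0 :&: V1 = 0)%VS. Proof. exact/directv_addP/hLie.1.2. Qed.

Definition pi (b : bool) : 'End(V) :=
  if b then daddv_pi V1 V0 else daddv_pi V0 V1.

Lemma pi_mem b w : pi b w \in comp b.
Proof. by case: b; apply: memv_pi. Qed.

Lemma pi_sum w : pi false w + pi true w = w.
Proof. by apply: daddv_pi_add => //; rewrite hLie.1.1 memvf. Qed.

Lemma pi_comp c k w : w \in comp k -> pi c w = if c == k then w else 0.
Proof.
move=> wk; have pi_id : pi k w = w.
  by case: k wk => wk; apply: daddv_pi_id; rewrite // capvC.
case: eqP => [-> //|/eqP ck]; have := pi_sum w.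
case: c k ck wk pi_id => [] [] //= _ _ -> e.
  by apply: (@addrI _ w); rewrite e addr0.
by apply: (@addIr _ w); rewrite e add0r.
Qed.

Lemma br_pi k c x w : x \in comp k -> br x (pi c w) = pi (k (+) c) (br x w).
Proof.
move=> xk; rewrite -{2}(pi_sum w) brDr linearD /=.
rewrite (pi_comp _ (br_comp xk (pi_mem false w))).
rewrite (pi_comp _ (br_comp xk (pi_mem true w))).
by case: k c {xk} => [] [] /=; rewrite ?addr0 ?add0r.
Qed.

Definition pi_stable (U : {vspace V}) := forall b w, w \in U -> pi b w \in U.

Lemma gradedP U : graded V0 V1 U <-> pi_stable U.
Proof.
split=> [defU b w | piU].
  rewrite {1}defU => /memv_addP [u0 /memv_capP [u0U u00] [u1 /memv_capP [u1U u11] ->]].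
  rewrite linearD /= (@pi_comp b false u0 u00) (@pi_comp b true u1 u11).
  by case: b; rewrite /= ?addr0 ?add0r.
apply: subv_anti; rewrite subv_add !capvSl !andbT.
apply/subvP=> w wU; rewrite -(pi_sum w) memv_add //; apply/memv_capP.
  by split; [apply: piU | apply: (pi_mem false)].
by split; [apply: piU | apply: (pi_mem true)].
Qed.

Lemma pi_stable0 : pi_stable 0%VS.
Proof. by move=> b w; rewrite memv0 => /eqP ->; rewrite linear0 mem0v. Qed.

Lemma pi_stableD U W : pi_stable U -> pi_stable W -> pi_stable (U + W)%VS.
Proof.
move=> piU piW b w /memv_addP [u uU [v vW ->]].
by rewrite linearD memv_add ?piU ?piW.
Qed.

Lemma pi_stableI U W : pi_stable U -> pi_stable W -> pi_stable (U :&: W)%VS.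
Proof. by move=> piU piW b w /memv_capP [wU wW]; rewrite memv_cap piU ?piW. Qed.

Lemma homogeneous_notin (U W : {vspace V}) : pi_stable U -> ~~ (U <= W)%VS ->
  exists b v, [/\ v \in U, v \notin W & v \in comp b].
Proof.
move=> piU /subvPn [w wU wW].
case pi0W: (pi false w \in W); last by exists false, (pi false w); rewrite piU ?pi_mem ?pi0W.
case pi1W: (pi true w \in W); last by exists true, (pi true w); rewrite piU ?pi_mem ?pi1W.
by rewrite -(pi_sum w) memvD in wW.
Qed.

Lemma memv_brack (A B : {vspace V}) a b :
  a \in A -> b \in B -> br a b \in brack_vs br A B.
Proof.
move=> aA bB; have [/andP [/eqP defA _] /andP [/eqP defB _]] := (vbasisP A, vbasisP B).
have: (B <= lfun_preim (ad a) (brack_vs br A B))%VS.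
  rewrite -{1}defB; apply/span_subvP => y yB; rewrite -memv_preim adE.
  have: (A <= lfun_preim (adr y) (brack_vs br A B))%VS.
    rewrite -{1}defA; apply/span_subvP => x xA; rewrite -memv_preim adrE.
    by apply: memv_span; apply: allpairs_f.
  by move/subvP/(_ a aA); rewrite -memv_preim adrE.
by move/subvP/(_ b bB); rewrite -memv_preim adE.
Qed.

Lemma brack_vs_subv (A B C : {vspace V}) :
    (forall a b, a \in A -> b \in B -> br a b \in C) ->
  (brack_vs br A B <= C)%VS.
Proof.
move=> ABC; apply/span_subvP => z /allpairsP [[x y] [xA yB ->]].
by apply: ABC; apply: vbasis_mem.
Qed.

Lemma pi_stable_brack A B : pi_stable A -> pi_stable B -> pi_stable (brack_vs br A B).
Proof.
move=> piA piB c w.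
suff: (brack_vs br A B <= lfun_preim (pi c) (brack_vs br A B))%VS.
  by move/subvP/(_ w); rewrite -memv_preim.
apply: brack_vs_subv => a b aA bB; rewrite -memv_preim.
have pi_br i j : pi c (br (pi i a) (pi j b)) \in brack_vs br A B.
  rewrite (pi_comp c (br_comp (pi_mem i a) (pi_mem j b))).
  by case: ifP; rewrite ?mem0v ?memv_brack ?piA ?piB.
rewrite -(pi_sum a) -(pi_sum b) !brDl !brDr !linearD.
by do !apply: memvD; apply: pi_br.
Qed.

Lemma memv_derived x y : br x y \in derived br.
Proof. by rewrite memv_brack ?memvf. Qed.

Lemma pi_stable_derived : pi_stable (derived br).
Proof. by apply: pi_stable_brack => b w _; rewrite memvf. Qed.

Lemma graded_idealP I :
  graded_ideal I <-> pi_stable I /\ (forall x v, v \in I -> br x v \in I).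
Proof.
rewrite /Defs.graded_ideal gradedP; split=> [[piI IbrI] | [piI brI]]; split=> //.
  by move=> x v vI; rewrite (subvP IbrI) ?memv_brack ?memvf.
by apply: brack_vs_subv => x v _; apply: brI.
Qed.

Lemma graded_ideal0 : graded_ideal 0%VS.
Proof.
apply/graded_idealP; split=> [|x v]; first exact: pi_stable0.
by rewrite memv0 => /eqP ->; rewrite br0r mem0v.
Qed.

Lemma graded_idealf : graded_ideal fullv.
Proof. by apply/graded_idealP; split=> [b|x] w _; rewrite memvf. Qed.

Lemma graded_idealD A B : graded_ideal A -> graded_ideal B -> graded_ideal (A + B)%VS.
Proof.
move=> /graded_idealP [piA brA] /graded_idealP [piB brB].
apply/graded_idealP; split=> [|x w /memv_addP [a aA [b bB ->]]]; first exact: pi_stableD.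
by rewrite brDr memv_add ?brA ?brB.
Qed.

Lemma graded_idealI A B : graded_ideal A -> graded_ideal B -> graded_ideal (A :&: B)%VS.
Proof.
move=> /graded_idealP [piA brA] /graded_idealP [piB brB].
apply/graded_idealP; split=> [|x w /memv_capP [wA wB]]; first exact: pi_stableI.
by rewrite memv_cap brA ?brB.
Qed.

Lemma graded_ideal_derived : graded_ideal (derived br).
Proof.
by apply/graded_idealP; split=> [|x w _]; [exact: pi_stable_derived | exact: memv_derived].
Qed.

Lemma graded_ideal_brack A B :
  graded_ideal A -> graded_ideal B -> graded_ideal (brack_vs br A B).
Proof.
move=> /graded_idealP [piA brA] /graded_idealP [piB brB].
apply/graded_idealP; split=> [|x w]; first exact: pi_stable_brack.
suff: (brack_vs br A B <= lfun_preim (ad x) (brack_vs br A B))%VS.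
  by move/subvP/(_ w); rewrite -memv_preim adE.
apply: brack_vs_subv => a b aA bB; rewrite -memv_preim adE.
have br_hom i j : br (pi i x) (br (pi j a) b) \in brack_vs br A B.
  rewrite (jacobi _ (pi_mem i x) (pi_mem j a)).
  by rewrite memvD ?memvZ ?memv_brack ?brA ?brB ?piA.
by rewrite -(pi_sum x) -(pi_sum a) !brDl !brDr !memvD.
Qed.

Lemma subv_lower_central_add (A I J : {vspace V}) : (forall x v, v \in J -> br x v \in J) ->
    (I <= A + J)%VS -> (I <= brack_vs br A I + J)%VS ->
  forall k, (I <= lower_central br A k + J)%VS.
Proof.
move=> brJ IAJ IAIJ; elim=> [//|k IHk] /=.
apply: subv_trans IAIJ _; rewrite subv_add addvSr andbT.
apply: brack_vs_subv => a b aA bI.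
have /memv_addP [l lk [j jJ ->]] := subvP IHk b bI.
by rewrite brDr memv_add ?memv_brack ?brJ.
Qed.

Lemma graded_ideal_add_line J v b : graded_ideal J -> v \in comp b ->
  (forall y, br y v \in (J + <[v]>)%VS) -> graded_ideal (J + <[v]>)%VS.
Proof.
move=> /graded_idealP [piJ brJ] vb brv; apply/graded_idealP; split.
  apply: pi_stableD => // c w /vlineP [k ->]; rewrite linearZ /= (pi_comp c vb).
  by case: ifP; rewrite ?memvZ ?memv_line ?mem0v.
move=> x w /memv_addP [u uJ [_ /vlineP [k ->] ->]].
by rewrite brDr brZr memvD ?memvZ // (subvP (addvSl J <[v]>)) ?brJ.
Qed.

(* The part of I that f maps into J, for f homogeneous of parity c and
   commuting with each ad y up to a sign s j, modulo J. *)
Lemma graded_ideal_preim (f : 'End(V)) c (s : bool -> K) J I :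
    graded_ideal J -> graded_ideal I ->
    (forall b w, f (pi b w) = pi (c (+) b) (f w)) ->
    (forall j y w, y \in comp j -> w \in I -> f (br y w) - s j *: br y (f w) \in J) ->
  graded_ideal (I :&: lfun_preim f J)%VS.
Proof.
move=> /graded_idealP [piJ brJ] /graded_idealP [piI brI] f_pi f_br.
apply/graded_idealP; split=> [b | y] w; rewrite !memv_cap -!memv_preim.
  by case/andP=> wI fwJ; rewrite piI // f_pi piJ.
case/andP=> wI fwJ; rewrite brI //=.
have fbrJ j y' : y' \in comp j -> f (br y' w) \in J.
  move=> y'j; rewrite -(subrK (s j *: br y' (f w)) (f (br y' w))).
  by rewrite memvD ?f_br ?memvZ ?brJ.
by rewrite -(pi_sum y) brDl linearD memvD ?(fbrJ _ _ (pi_mem _ _)).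
Qed.

End LieSuperalgebra.

Section ChiefSeries.
Variables (K : closedFieldType) (V : vectType K) (br : V -> V -> V) (V0 V1 : {vspace V}).
Hypotheses (hLie : is_lie_superalgebra br V0 V1) (two_neq0 : 2%:R != 0 :> K).
Hypothesis hcs : completely_solvable br.

Local Notation graded_ideal := (graded_ideal br V0 V1).
Local Notation D := (derived br).

Let jacobi := hLie.2.2.2.2.2.1.

Section ChiefFactor.
Variables J I : {vspace V}.
Hypotheses (gJ : graded_ideal J) (gI : graded_ideal I).
Hypotheses (JI : (J <= I)%VS) (IJ : ~~ (I <= J)%VS).
Hypothesis Imin :
  forall L, graded_ideal L -> (J <= L)%VS -> (L <= I)%VS -> L = J \/ L = I.

Let brJ : forall x v, v \in J -> br x v \in J. Proof. by case/(graded_idealP hLie): gJ. Qed.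
Let piI : pi_stable V0 V1 I. Proof. by case/(graded_idealP hLie): gI. Qed.
Let brI : forall x v, v \in I -> br x v \in I. Proof. by case/(graded_idealP hLie): gI. Qed.

Lemma chief_factor_outside_derived :
  ~~ (I <= D + J)%VS -> forall y v, v \in I -> br y v \in J.
Proof.
move=> IDJ y v vI; pose L := (I :&: (D + J))%VS.
have gL : graded_ideal L.
  exact (graded_idealI hLie gI (graded_idealD hLie (graded_ideal_derived hLie) gJ)).
have JL : (J <= L)%VS by rewrite subv_cap JI addvSr.
have [LJ|LI] := Imin gL JL (capvSl _ _).
  have: br y v \in L by rewrite memv_cap brI // (subvP (addvSl D J)) ?(memv_derived hLie).
  by rewrite LJ.
by case/negP: IDJ; rewrite -LI capvSr.
Qed.

Lemma derived_action_chief_factor :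
  (I <= D + J)%VS -> forall d v, d \in D -> v \in I -> br d v \in J.
Proof.
move=> IDJ; pose S := (brack_vs br D I + J)%VS.
have gS : graded_ideal S.
  exact (graded_idealD hLie (graded_ideal_brack hLie (graded_ideal_derived hLie) gI) gJ).
have SI : (S <= I)%VS.
  by rewrite subv_add JI andbT; apply: brack_vs_subv => d v _; apply: brI.
have [SJ|SI'] := Imin gS (addvSr _ _) SI.
  move=> d v dD vI; have: br d v \in S by rewrite (subvP (addvSl _ J)) ?(memv_brack hLie).
  by rewrite SJ.
have IS : (I <= brack_vs br D I + J)%VS by rewrite -/S SI'.
have [n Dn0] := hcs.
by have := subv_lower_central_add hLie brJ IDJ IS n; rewrite Dn0 add0v (negPf IJ).
Qed.

Lemma odd_action_chief_factor :
  (I <= D + J)%VS -> forall o v, o \in V1 -> v \in I -> br o v \in J.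
Proof.
move=> IDJ o v oV1 vI; have dJ := derived_action_chief_factor IDJ.
pose Ko := (I :&: lfun_preim (ad br o) J)%VS.
have memKo w : (w \in Ko) = (w \in I) && (br o w \in J).
  by rewrite memv_cap -memv_preim (adE hLie).
have gKo : graded_ideal Ko.
  apply: (graded_ideal_preim hLie (c := true) (s := sgn K true)) => //.
    by move=> b w; rewrite !(adE hLie) (br_pi hLie (k := true)).
  move=> j y w yj wI; rewrite !(adE hLie) (@jacobi true j o y w oV1 yj) addrK.
  exact: dJ (memv_derived hLie _ _) wI.
have JKo : (J <= Ko)%VS by apply/subvP => w wJ; rewrite memKo (subvP JI) ?brJ.
have [KoJ|KoI] := Imin gKo JKo (capvSl _ _); last first.
  by move: vI; rewrite -KoI memKo => /andP [].
case/negP: IJ; apply/subvP => w wI.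
(* Super Jacobi with x = y = o reads 2 [o,[o,w]] = [[o,o],w]. *)
have oowJ : br o (br o w) \in J.
  have e := @jacobi true true o o w oV1 oV1; rewrite /sgn expr1 scaleN1r in e.
  rewrite -[br o _](scalerK two_neq0) memvZ // scaler_nat mulr2n {1}e addrNK.
  exact: dJ (memv_derived hLie _ _) wI.
have owJ : br o w \in J by rewrite -KoJ memKo brI.
by rewrite -KoJ memKo wI.
Qed.

Lemma even_action_chief_factor : (I <= D + J)%VS ->
  forall x, x \in V0 -> exists a, forall v, v \in I -> br x v - a *: v \in J.
Proof.
move=> IDJ x xV0; have dJ := derived_action_chief_factor IDJ.
have adI v : v \in I -> ad br x v \in I by rewrite (adE hLie); apply: brI.
have [a [c [cI cJ xcJ]]] := leigenvector_mod JI IJ adI.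
pose f := (ad br x - a *: \1)%VF.
have fE w : f w = br x w - a *: w.
  by rewrite add_lfunE opp_lfunE scale_lfunE id_lfunE (adE hLie).
pose Ex := (I :&: lfun_preim f J)%VS.
have memEx w : (w \in Ex) = (w \in I) && (br x w - a *: w \in J).
  by rewrite memv_cap -memv_preim fE.
have gEx : graded_ideal Ex.
  apply: (graded_ideal_preim hLie (c := false) (s := fun=> 1)) => //.
    by move=> b w; rewrite !fE (br_pi hLie (k := false)) // [in RHS]linearB [in RHS]linearZ.
  move=> j y w yj wI; rewrite !fE scale1r (@jacobi false j x y w xV0 yj).
  rewrite /sgn expr0 scale1r (brBr hLie) (brZr hLie) opprB addrA subrK addrK.
  exact: dJ (memv_derived hLie _ _) wI.
have JEx : (J <= Ex)%VS.
  by apply/subvP => w wJ; rewrite memEx (subvP JI) ?memvB ?memvZ ?brJ.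
have [ExJ|ExI] := Imin gEx JEx (capvSl _ _).
  by case/negP: cJ; rewrite -ExJ memEx cI -(adE hLie).
by exists a => v; rewrite -ExI memEx => /andP [].
Qed.

Lemma chief_factor_scalar_action y :
  exists a, forall v, v \in I -> br y v - a *: v \in J.
Proof.
have [IDJ|IDJ] := boolP (I <= D + J)%VS; last first.
  by exists 0 => v vI; rewrite scale0r subr0 chief_factor_outside_derived.
have [a ay0] := even_action_chief_factor IDJ (pi_mem V0 V1 false y).
exists a => v vI; rewrite -(pi_sum hLie y) (brDl hLie) addrAC memvD ?ay0 //.
exact (odd_action_chief_factor IDJ (pi_mem V0 V1 true y) vI).
Qed.

Lemma dim_chief_factor : \dim I = (\dim J).+1.
Proof.
have [b [v [vI vJ vb]]] := homogeneous_notin hLie piI IJ.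
have gL : graded_ideal (J + <[v]>)%VS.
  apply: (graded_ideal_add_line hLie gJ vb) => y.
  have [a ayJ] := chief_factor_scalar_action y.
  by rewrite -(subrK (a *: v) (br y v)) memv_add ?ayJ ?memvZ ?memv_line.
have LI : (J + <[v]> <= I)%VS by rewrite subv_add JI -memvE.
have [LJ|<-] := Imin gL (addvSl _ _) LI; last by rewrite dimv_add_line.
by case/negP: vJ; rewrite -LJ (subvP (addvSr J _)) ?memv_line.
Qed.

End ChiefFactor.

Lemma graded_ideal_refine J I : graded_ideal J -> graded_ideal I ->
    (J <= I)%VS -> ~~ (I <= J)%VS ->
  exists L, [/\ graded_ideal L, (J <= L)%VS, (L <= I)%VS & \dim L = (\dim J).+1].
Proof.
move=> gJ gI; have [n] := ubnP (\dim I).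
elim: n I gI => [|n IHn] I gI // dimI JI IJ.
have [[L [gL JL LI LJ LI']] | noL] :=
  classic (exists L, [/\ graded_ideal L, (J <= L)%VS, (L <= I)%VS, L != J & L != I]).
  have ltLI : (\dim L < \dim I)%N.
    rewrite (ltn_leqif (dimv_leqif_sup LI)); apply: contra LI' => IL.
    by apply/eqP/subv_anti; rewrite LI IL.
  have LJ' : ~~ (L <= J)%VS.
    by apply: contra LJ => LJ; apply/eqP/subv_anti; rewrite LJ JL.
  have [M [gM JM ML dM]] := IHn L gL (leq_trans ltLI dimI) JL LJ'.
  by exists M; split=> //; apply: subv_trans ML LI.
exists I; split=> //; apply: dim_chief_factor => // L gL JL LI.
have [->|LJ] := eqVneq L J; first by left.
have [->|LI'] := eqVneq L I; first by right.
by case: noL; exists L.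
Qed.

Lemma minimal_graded_ideal_dim I :
  minimal_graded_ideal br V0 V1 I -> \dim I = 1%N.
Proof.
case=> gI I0 Imin; have := dim_chief_factor (graded_ideal0 hLie) gI (sub0v I).
by rewrite subv0 dimv0; apply=> // L gL _; apply: Imin.
Qed.

Lemma graded_ideal_flag : exists H : nat -> {vspace V}, forall i, (i <= \dim {:V})%N ->
  [/\ graded_ideal (H i), \dim (H i) = i & (i < \dim {:V})%N -> (H i <= H i.+1)%VS].
Proof.
suff flag k : (k <= \dim {:V})%N -> exists H : nat -> {vspace V}, forall i, (i <= k)%N ->
    [/\ graded_ideal (H i), \dim (H i) = i & (i < k)%N -> (H i <= H i.+1)%VS].
  by have [H HP] := flag _ (leqnn _); exists H.
elim: k => [_|k IHk ltkN].
  exists (fun=> 0%VS) => i; rewrite leqn0 => /eqP ->.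
  by rewrite dimv0; split=> //; apply: graded_ideal0.
have [H HP] := IHk (ltnW ltkN); have [gHk dHk _] := HP k (leqnn k).
have HkV : ~~ (fullv <= H k)%VS by apply/negP => /dimvS; rewrite dHk leqNgt ltkN.
have [L [gL HkL _ dL]] := graded_ideal_refine gHk (graded_idealf hLie) (subvf _) HkV.
exists (fun i => if i == k.+1 then L else H i) => i.
rewrite leq_eqVlt ltnS /= => /predU1P [->|leik].
  by rewrite eqxx dL dHk ltnn; split.
have [gHi dHi Hinc] := HP i leik; rewrite eqSS (ltn_eqF (leik : i < k.+1)%N).
split=> // _; have [->|neik] := eqVneq i k; first exact: HkL.
by rewrite Hinc // ltn_neqAle neik.
Qed.

End ChiefSeries.

Theorem lemma5p1 (K : closedFieldType) (p : nat) (pK : p \in [pchar K]) (p_gt2 : (2 < p)%N)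
    (V : vectType K) (br : V -> V -> V) (V0 V1 : {vspace V})
    (hLie : is_lie_superalgebra br V0 V1)
    (hcs : completely_solvable br) :
  (forall I : {vspace V}, minimal_graded_ideal br V0 V1 I -> \dim I = 1%N) /\
  (exists G : nat -> {vspace V},
     [/\ G 0%N = fullv, G (\dim (fullv : {vspace V})) = 0%VS &
      forall i : nat, (i <= \dim (fullv : {vspace V}))%N ->
        [/\ graded_ideal br V0 V1 (G i),
            \dim (G i) = (\dim (fullv : {vspace V}) - i)%N &
            (i < \dim (fullv : {vspace V}))%N -> (G i.+1 <= G i)%VS]]).
Proof.
have two_neq0 : 2%:R != 0 :> K by rewrite -(dvdn_pcharf pK) gtnNdvd.
split; first exact: minimal_graded_ideal_dim hLie two_neq0 hcs.
have [H HP] := graded_ideal_flag hLie two_neq0 hcs; set N := \dim fullv in HP *.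
exists (fun i => H (N - i)%N); split.
- have [_ dHN _] := HP N (leqnn N).
  by apply/eqP; rewrite subn0 eqEdim subvf dHN leqnn.
- have [_ dH0 _] := HP 0%N (leq0n N).
  by apply/eqP; rewrite subnn -dimv_eq0 dH0.
- move=> i leiN; have [gHi dHi _] := HP (N - i)%N (leq_subr i N).
  split=> // ltiN; have [_ _ Hinc] := HP (N - i.+1)%N (leq_subr _ _).
  by rewrite -(subnSK ltiN) Hinc // subnSK // leq_subr.
Qed.
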